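(* Let $m,k$ be natural numbers. If the first term in the hereditary representation in base $k+1$ of the $k$-th term $G(k,m)$ of the Goodstein sequence $G(m)$ is of the form $1\cdot(k+1)^{l}$ with $k+1\le l$, then $G(k+1,m)>G(k,m)$.
   Context: For a natural number base $b>1$, the hereditary representation $m\langle b\rangle$ of $m$ is $\sum_{i=0}^{l} a_i b^{i}$ with $0\le a_i<b$, $a_l\ne0$, each exponent itself written in hereditary representation in base $b$, recursively; its first (leading) term is $a_l b^{l}$. $m\langle b\rangle''$ is obtained by syntactically replacing every $b$ by $b+1$ in $m\langle b\rangle$. The Goodstein sequence $G(m)=\{m, m''-1, (m''-1)''-1,\dots\}$ starts from $m$ in base $2$; its $n$-th term is $G(n,m)$, with $G(1,m)=m$ in base $2$, $G(k,m)$ written in base $k+1$, and $G(k+1,m)=G(k,m)\langle k+1\rangle''-1$. *)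

From mathcomp Require Import all_boot.
Set Implicit Arguments. Unset Strict Implicit. Unset Printing Implicit Defensive.

Definition digit (b m i : nat) : nat := (m %/ b ^ i) %% b.

(* exponent l of the leading term a_l b^l of m (m > 0, b > 1) *)
Definition lead_exp (b m : nat) : nat := trunc_log b m.

Definition lead_digit (b m : nat) : nat := digit b m (lead_exp b m).

(* hbump_fuel f b m : value of m<b>'' (every b replaced by b+1 in the
   hereditary base-b representation), computed with fuel f.
   m = sum_{i<=l} a_i b^i  |->  sum_{i<=l} a_i (b+1)^(i<b>''). *)
Fixpoint hbump_fuel (f b m : nat) : nat :=
  match f with
  | 0 => 0
  | f'.+1 => sumn [seq digit b m i * b.+1 ^ hbump_fuel f' b i | i <- iota 0 (trunc_log b m).+1]
  end.

(* exponents i <= trunc_log b m < m, so fuel m.+1 suffices *)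
Definition hbump (b m : nat) : nat := hbump_fuel m.+1 b m.

(* goodstein k m = G(k,m): G(1,m) = m, G(k+1,m) = G(k,m)<k+1>'' - 1.
   (index 0 is a dummy value, unused) *)
Fixpoint goodstein (k m : nat) : nat :=
  match k with
  | 0 => m
  | k'.+1 => if k' is 0 then m else hbump k' .+1 (goodstein k' m) - 1
  end.

From mathcomp Require Import all_boot zify.

(* Bumping the base never decreases a hereditary representation: every digit
   term a_i b^i becomes a_i (b+1)^(i<b>'') with i <= i<b>''.  When the leading
   exponent l is at least 2, the leading term alone grows by at least 2, since
   (b+1)^l >= b^l + 2; hence m<b>'' - 1 > m. *)

Lemma modn_expn_digits b x n : 1 < b ->
  x %% b ^ n = \sum_(0 <= i < n) digit b x i * b ^ i.
Proof.
move=> b_gt1; elim: n => [|n IHn]; first by rewrite big_geq // expn0 modn1.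
rewrite big_nat_recr //= -IHn /digit.
set q := x %/ b ^ n.
have x_split : x = q %/ b * b ^ n.+1 + (q %% b * b ^ n + x %% b ^ n).
  by rewrite {1}(divn_eq x (b ^ n)) -/q {1}(divn_eq q b) expnS; lia.
rewrite {1}x_split modnMDl modn_small; first lia.
have low_lt : x %% b ^ n < b ^ n by rewrite ltn_mod expn_gt0; lia.
have digit_lt : q %% b < b by rewrite ltn_mod; lia.
have : q %% b * b ^ n + b ^ n <= b * b ^ n.
  by rewrite -mulSnr leq_mul2r digit_lt orbT.
by rewrite expnS; lia.
Qed.

Lemma digits_expansion b x : 1 < b ->
  x = \sum_(0 <= i < (trunc_log b x).+1) digit b x i * b ^ i.
Proof. by move=> b_gt1; rewrite -modn_expn_digits // modn_small // trunc_log_ltn. Qed.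

Lemma lead_digit_gt0 [b x] : 1 < b -> 0 < x -> 0 < digit b x (trunc_log b x).
Proof.
move=> b_gt1 x_gt0; have [lo hi] := andP (trunc_log_bounds b_gt1 x_gt0).
have pow_gt0 : 0 < b ^ trunc_log b x by rewrite expn_gt0; lia.
by rewrite /digit modn_small ?divn_gt0 // ltn_divLR // -expnS.
Qed.

Lemma trunc_log_ltn_self [b x] : 1 < b -> 0 < x -> trunc_log b x < x.
Proof. by move=> b_gt1 x_gt0; apply: leq_trans (trunc_logP b_gt1 x_gt0); apply: ltn_expl. Qed.

Lemma hbump_fuelE f b x :
  hbump_fuel f.+1 b x =
  \sum_(0 <= i < (trunc_log b x).+1) digit b x i * b.+1 ^ hbump_fuel f b i.
Proof. by rewrite /= sumnE big_map /index_iota subn0 /= big_cons. Qed.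

Lemma leq_expn_succ b i j : i <= j -> b ^ i <= b.+1 ^ j.
Proof.
move=> le_ij; apply: leq_trans (leq_pexp2l (ltn0Sn b) le_ij).
by case: i {le_ij} => [|i] //; rewrite leq_exp2r.
Qed.

Lemma leq_digits_sum_bump b x n (e : nat -> nat) :
  (forall i, i < n -> i <= e i) ->
  \sum_(0 <= i < n) digit b x i * b ^ i <=
  \sum_(0 <= i < n) digit b x i * b.+1 ^ e i.
Proof.
move=> le_e; rewrite big_nat_cond [X in _ <= X]big_nat_cond.
apply: leq_sum => i /andP [/andP [_ lt_in] _].
by rewrite leq_mul2l leq_expn_succ ?le_e ?orbT.
Qed.

Lemma leq_hbump_fuel [f b x] : 1 < b -> x < f -> x <= hbump_fuel f b x.
Proof.
move=> b_gt1; elim: f x => [|f IHf] [|x] // lt_xf.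
rewrite hbump_fuelE {1}(@digits_expansion _ x.+1 b_gt1).
apply: leq_digits_sum_bump => i lt_il; apply: IHf.
by have := trunc_log_ltn_self b_gt1 (ltn0Sn x); lia.
Qed.

Lemma expn_succ_ge_add2 [b l] : 0 < b -> 1 < l -> b ^ l + 2 <= b.+1 ^ l.
Proof.
move=> b_gt0; case: l => [|[|l]] // _.
have le_pow : b ^ l <= b.+1 ^ l by apply: leq_expn_succ.
have pow_gt0 : 0 < b ^ l by rewrite expn_gt0 b_gt0.
rewrite !expnS; nia.
Qed.

Lemma hbump_ge_add2 [b x] : 1 < b -> 1 < trunc_log b x -> x.+2 <= hbump b x.
Proof.
move=> b_gt1 l_gt1.
have x_gt0 : 0 < x by case: x l_gt1 => [|x]; rewrite ?trunc_log0.
rewrite /hbump hbump_fuelE {1}(@digits_expansion _ x b_gt1) !big_nat_recr //=.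
set l := trunc_log b x; set a := digit b x l.
have l_lt_x : l < x := trunc_log_ltn_self b_gt1 x_gt0.
have lower := leq_digits_sum_bump b x l (hbump_fuel x b) (fun i lt_il =>
  leq_hbump_fuel b_gt1 (ltn_trans lt_il l_lt_x)).
have a_gt0 : 0 < a by apply: lead_digit_gt0.
have le_l : l <= hbump_fuel x b l := leq_hbump_fuel b_gt1 l_lt_x.
have lead : b ^ l + 2 <= b.+1 ^ hbump_fuel x b l.
  exact: leq_trans (expn_succ_ge_add2 (ltnW b_gt1) l_gt1) (leq_pexp2l (ltn0Sn b) le_l).
have : a * (b ^ l + 2) <= a * b.+1 ^ hbump_fuel x b l by rewrite leq_mul2l lead orbT.
nia.
Qed.

Lemma goodsteinS k m :
  0 < k -> goodstein k.+1 m = hbump k.+1 (goodstein k m) - 1.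
Proof. by case: k. Qed.

Theorem lemma4 (m k : nat) :
  0 < k ->
  0 < goodstein k m ->
  lead_digit k.+1 (goodstein k m) = 1 ->
  k.+1 <= lead_exp k.+1 (goodstein k m) ->
  goodstein k.+1 m > goodstein k m.
Proof.
move=> k_gt0 _ _ le_exp.
have := hbump_ge_add2 (k_gt0 : 1 < k.+1) (leq_trans (k_gt0 : 1 < k.+1) le_exp).
by rewrite goodsteinS //; lia.
Qed.
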